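(* Let $(L,\preceq)$ be a lattice and $\delta$ a local congruence on $L$. Then the relation $\preceq_\delta$ on $L/\delta$ is a partial order if and only if every $\delta$-cycle in $L$ is closed.
   Context: For an equivalence relation $\delta$ on $L$, $[a]_\delta$ is the class of $a$ and $L/\delta$ the set of classes. A local congruence on a lattice $(L,\preceq)$ is an equivalence relation each of whose classes is a sublattice of $L$ and is convex (if $u,v$ are in the class and $u\preceq w\preceq v$, then $w$ is in the class). A $\delta$-sequence from $p_0$ to $p_n$ is a finite sequence $(p_0,p_1,\dots,p_n)$ of elements of $L$ with $n\ge1$ such that for each $i\in\{1,\dots,n\}$ either $(p_{i-1},p_i)\in\delta$ or $p_{i-1}\preceq p_i$. A $\delta$-cycle is a $\delta$-sequence $(p_0,\dots,p_n)$ with $p_0=p_n$; it is closed if $[p_0]_\delta=[p_1]_\delta=\dots=[p_n]_\delta$. The relation $\preceq_\delta$ on $L/\delta$ is defined by $[x]_\delta\preceq_\delta[y]_\delta$ iff there exists a $\delta$-sequence from some $x'\in[x]_\delta$ to some $y'\in[y]_\delta$ (it is always a preorder). *)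

From mathcomp Require Import all_boot all_order.
Set Implicit Arguments. Unset Strict Implicit. Unset Printing Implicit Defensive.
Import Order.TTheory.
Local Open Scope order_scope.

Section LocalCongruence.
Context {disp : Order.disp_t} {L : latticeType disp}.

Definition equivalence_rel (delta : L -> L -> Prop) : Prop :=
  (forall x, delta x x) /\
  (forall x y, delta x y -> delta y x) /\
  (forall x y z, delta x y -> delta y z -> delta x z).

Definition eclass (delta : L -> L -> Prop) (a : L) : L -> Prop := delta a.

Definition local_congruence (delta : L -> L -> Prop) : Prop :=
  equivalence_rel delta /\
  (forall a u v, eclass delta a u -> eclass delta a v ->
       eclass delta a (Order.meet u v) /\ eclass delta a (Order.join u v)) /\
  (forall a u v w, eclass delta a u -> eclass delta a v ->
       u <= w -> w <= v -> eclass delta a w).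

Fixpoint dsteps (delta : L -> L -> Prop) (x : L) (s : seq L) : Prop :=
  match s with
  | [::] => True
  | y :: s' => (delta x y \/ x <= y) /\ dsteps delta y s'
  end.

(* (x :: s) is a delta-sequence (n = size s >= 1) from x to last x s *)
Definition delta_sequence (delta : L -> L -> Prop) (x : L) (s : seq L) : Prop :=
  s <> [::] /\ dsteps delta x s.

Definition delta_cycle (delta : L -> L -> Prop) (x : L) (s : seq L) : Prop :=
  delta_sequence delta x s /\ last x s = x.

Definition closed_cycle (delta : L -> L -> Prop) (x : L) (s : seq L) : Prop :=
  forall z, z \in x :: s -> eclass delta z = eclass delta x.

Definition is_class (delta : L -> L -> Prop) (A : L -> Prop) : Prop :=
  exists a, A = eclass delta a.

Definition qle (delta : L -> L -> Prop) (A B : L -> Prop) : Prop :=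
  exists x' y' s, A x' /\ B y' /\ delta_sequence delta x' s /\ last x' s = y'.

Definition quotient_partial_order (delta : L -> L -> Prop) : Prop :=
  (forall A, is_class delta A -> qle delta A A) /\
  (forall A B C, is_class delta A -> is_class delta B -> is_class delta C ->
      qle delta A B -> qle delta B C -> qle delta A C) /\
  (forall A B, is_class delta A -> is_class delta B ->
      qle delta A B -> qle delta B A -> A = B).

End LocalCongruence.

(* Say y is reachable from x when some δ-sequence leads from x to y.  Then
   [x]_δ ⪯_δ [y]_δ holds exactly when y is reachable from x, since a δ-step
   may enter and leave a class at any of its members.  Reachability is always
   a preorder, so ⪯_δ is a partial order iff mutual reachability implies
   δ-equivalence.  A δ-cycle through z makes p_0 and z mutually reachable,
   and conversely two mutually reachable elements lie on a common δ-cycle, so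
   closedness of all δ-cycles is the same condition. *)

From Pilot Require Import Defs.
From mathcomp Require Import all_boot all_order.
From Stdlib Require Import FunctionalExtensionality PropExtensionality.

Set Implicit Arguments. Unset Strict Implicit. Unset Printing Implicit Defensive.
Local Open Scope order_scope.

Section Reachability.
Context {disp : Order.disp_t} {L : latticeType disp}.
Variable delta : L -> L -> Prop.

Definition reachable (x y : L) : Prop :=
  exists s, delta_sequence delta x s /\ last x s = y.

Lemma dsteps_cat x s1 s2 :
  dsteps delta x (s1 ++ s2) <-> dsteps delta x s1 /\ dsteps delta (last x s1) s2.
Proof. by elim: s1 x => [|y s1 IH] x /=; [tauto | rewrite IH; tauto]. Qed.

Lemma delta_sequence_cat x s1 s2 :
    delta_sequence delta x s1 -> dsteps delta (last x s1) s2 ->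
  delta_sequence delta x (s1 ++ s2).
Proof. by case: s1 => [[]|y s1] // [_ st1] st2; split=> //; apply/dsteps_cat. Qed.

Lemma reachable_step x y : delta x y \/ x <= y -> reachable x y.
Proof. by move=> xy; exists [:: y]. Qed.

Lemma reachable_trans x y z : reachable x y -> reachable y z -> reachable x z.
Proof.
move=> [s1 [seq1 <-]] [s2 [[_ st2] <-]].
by exists (s1 ++ s2); rewrite last_cat; split=> //; apply: delta_sequence_cat.
Qed.

Hypothesis delta_equiv : Defs.equivalence_rel delta.

Let delta_refl x : delta x x.
Proof. by case: delta_equiv. Qed.

Let delta_sym x y : delta x y -> delta y x.
Proof. by case: delta_equiv => _ [sym _]; apply: sym. Qed.

Let delta_trans x y z : delta x y -> delta y z -> delta x z.
Proof. by case: delta_equiv => _ [_ trans]; apply: trans. Qed.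

Lemma reachable_refl x : reachable x x.
Proof. by apply: reachable_step; left; apply: delta_refl. Qed.

Lemma reachable_dsteps x s : dsteps delta x s -> reachable x (last x s).
Proof.
case: s => [|y s] st; first exact: reachable_refl.
by exists (y :: s).
Qed.

Lemma eclass_eqE x y : eclass delta x = eclass delta y <-> delta x y.
Proof.
split=> [exy | xy].
- by apply: delta_sym; rewrite -[delta y]/(eclass delta y) -exy.
- apply: functional_extensionality => z; apply: propositional_extensionality.
  by split; [apply: delta_trans (delta_sym xy) | apply: delta_trans xy].
Qed.

Lemma qle_eclassE a b :
  qle delta (eclass delta a) (eclass delta b) <-> reachable a b.
Proof.
split.
- rewrite /eclass => -[x [y [s [ax [by_ xsy]]]]].
  apply: reachable_trans (reachable_step (or_introl ax)) _.
  apply: reachable_trans (reachable_step (or_introl (delta_sym by_))).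
  by exists s.
- by move=> [s ab]; exists a, b, s; rewrite /eclass.
Qed.

Definition reachable_antisymmetric : Prop :=
  forall a b, reachable a b -> reachable b a -> delta a b.

Lemma quotient_partial_orderE :
  quotient_partial_order delta <-> reachable_antisymmetric.
Proof.
split=> [[_ [_ antisym]] a b ab ba | antisym].
  apply/eclass_eqE/antisym; [exists a | exists b | exact/qle_eclassE ..] => //.
split; [|split].
- by move=> _ [a ->]; apply/qle_eclassE/reachable_refl.
- move=> _ _ _ [a ->] [b ->] [c ->] /qle_eclassE ab /qle_eclassE bc.
  by apply/qle_eclassE; apply: reachable_trans ab bc.
- by move=> _ _ [a ->] [b ->] /qle_eclassE ab /qle_eclassE ba; apply/eclass_eqE/antisym.
Qed.

Lemma delta_cycle_reachable x s z :
  delta_cycle delta x s -> z \in x :: s -> reachable x z /\ reachable z x.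
Proof.
move=> [[_ st] last_x]; rewrite in_cons => /orP [/eqP -> | z_s].
  by split; apply: reachable_refl.
case/splitPr: z_s st last_x => s1 s2; rewrite dsteps_cat last_cat /=.
move=> [st1 [step st2]] last_x; split.
- exact: reachable_trans (reachable_dsteps st1) (reachable_step step).
- by rewrite -[in reachable _ x]last_x; apply: reachable_dsteps.
Qed.

Lemma closed_cyclesE :
  (forall x s, delta_cycle delta x s -> closed_cycle delta x s) <->
  reachable_antisymmetric.
Proof.
split=> [closed a b [s1 [[s1_ne st1] ab]] [s2 [[_ st2] ba]] | antisym x s cyc z zs].
  have cyc : delta_cycle delta a (s1 ++ s2).
    by split; [apply: delta_sequence_cat; rewrite ?ab | rewrite last_cat ab].
  have b_in : b \in a :: s1 ++ s2 by rewrite -ab -cat_cons mem_cat mem_last.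
  exact/delta_sym/eclass_eqE/(closed _ _ cyc _ b_in).
have [xz zx] := delta_cycle_reachable cyc zs.
exact/eclass_eqE/delta_sym/antisym.
Qed.

End Reachability.

Theorem theorem4p7 (disp : Order.disp_t) (L : latticeType disp)
    (delta : L -> L -> Prop) :
  local_congruence delta ->
  (quotient_partial_order delta <->
   (forall (x : L) (s : seq L), delta_cycle delta x s -> closed_cycle delta x s)).
Proof.
move=> [delta_equiv _].
by rewrite quotient_partial_orderE // closed_cyclesE.
Qed.
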